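(* Let $X\in\{0,1\}$ be binary with $\Pr(X=0)>0$ and $\Pr(X=1)>0$, and let $Y_x$ be a real random variable such that for each $x'\in\{0,1\}$ the conditional cdf of $Y_x$ given $X=x'$ is strictly increasing and continuous on its support. Let $\underline{y}_x<\overline{y}_x$ denote the (possibly infinite) endpoints of the support of $Y_x$. Let $\mathcal{T}\subseteq\mathbb{R}$ and suppose $[\underline{y}_x,\overline{y}_x]\setminus\mathcal{T}$ contains a non-degenerate interval. Then there exists a latent propensity score $p:[\underline{y}_x,\overline{y}_x]\to[0,1]$ (i.e., a function such that the joint distribution of $(Y_x,X)$ with the given marginal distribution of $Y_x$ and with $\Pr(X=1\mid Y_x=y_x)=p(y_x)$ has $\Pr(X=1)$ equal to the given value) which is consistent with $\mathcal{T}$-independence of $Y_x$ from $X$, and for which the sets \[ \{y_x\in[\underline{y}_x,\overline{y}_x] : p(y_x)=0\} \quad\text{and}\quad \{y_x\in[\underline{y}_x,\overline{y}_x]: p(y_x)=1\} \] both have positive Lebesgue measure.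
   Context: $Y_x$ is $\mathcal{T}$-independent of $X$ if $F_{Y_x\mid X}(\tau\mid 0)=F_{Y_x\mid X}(\tau\mid 1)$ for all $\tau\in\mathcal{T}$, where $F_{Y_x\mid X}(\cdot\mid x')$ is the conditional cdf of $Y_x$ given $X=x'$. The latent propensity score is $p(y_x)=\Pr(X=1\mid Y_x=y_x)$. *)

From HB Require Import structures.
From mathcomp Require Import all_boot all_order all_algebra.
From mathcomp Require Import all_classical all_reals all_analysis.
Set Implicit Arguments. Unset Strict Implicit. Unset Printing Implicit Defensive.
Import Order.TTheory GRing.Theory Num.Theory.
Import numFieldNormedType.Exports.
Local Open Scope classical_set_scope.
Local Open Scope ring_scope.

Section Defs.
Context {d : measure_display} {Omega : measurableType d} {R : realType}.
Variable (P : probability Omega R).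

Definition cdf (Y : Omega -> R) (t : R) : R :=
  fine (P [set w | Y w <= t]).

Definition cond_cdf (Y X : Omega -> R) (x' : R) (t : R) : R :=
  fine (P ([set w | Y w <= t] `&` [set w | X w = x'])) /
  fine (P [set w | X w = x']).

Definition cond_supp (Y X : Omega -> R) (x' : R) : set R :=
  [set y : R | forall e : R, 0 < e ->
     (0 < P ([set w | (y - e < Y w < y + e)%R] `&` [set w | X w = x']))%E].

Definition supp_lo (Y : Omega -> R) : \bar R :=
  ereal_inf [set y%:E | y in [set y : R | 0 < cdf Y y]].
Definition supp_hi (Y : Omega -> R) : \bar R :=
  ereal_sup [set y%:E | y in [set y : R | cdf Y y < 1]].

(* conditional cdf of Y given X = x' in the joint distribution of (Y, X)
   determined by the marginal of Y and Pr(X = 1 | Y = y) = p y *)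
Definition latent_cond_cdf (Y : Omega -> R) (p : R -> R) (x' : R) (t : R) : R :=
  if x' == 1 then
    fine (\int[P]_(w in [set w | Y w <= t]) (p (Y w))%:E) /
    fine (\int[P]_w (p (Y w))%:E)
  else
    fine (\int[P]_(w in [set w | Y w <= t]) (1 - p (Y w))%:E) /
    fine (\int[P]_w (1 - p (Y w))%:E).

End Defs.

Definition T_independent {R : realType} (F : R -> R -> R) (T : set R) : Prop :=
  forall t, T t -> F 0 t = F 1 t.

From HB Require Import structures.
From mathcomp Require Import all_boot all_order all_algebra.
From mathcomp Require Import all_classical all_reals all_analysis.
From mathcomp Require Import ring lra measurable_realfun.
Set Implicit Arguments. Unset Strict Implicit. Unset Printing Implicit Defensive.
Import Order.TTheory GRing.Theory Num.Theory.
Import numFieldNormedType.Exports.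
Local Open Scope classical_set_scope.
Local Open Scope ring_scope.

(* Choose a non-degenerate interval (a, b) inside the support hull on which T
   has no point, and let p equal pi = Pr(X = 1) outside (a, b).  Inside,
   split (a, b) at a < h < c < b and put p = 1 on (a, h], p = 0 on (h, c] and
   a constant q on (c, b), with q chosen so that the integral of p(Y_x) over
   {Y_x in (a, b)} is pi Pr(Y_x in (a, b)).  Such a q in [0, 1] exists once
   Pr(Y_x in (a, c]) is small enough, which continuity of Pr from above
   provides by taking c close to a.  Then for every t outside (a, b), in
   particular every t in T, the event {Y_x <= t} either contains or misses
   {Y_x in (a, b)}, so integrating p(Y_x) over it gives pi Pr(Y_x <= t), and
   both latent conditional cdfs at t equal the marginal cdf. *)

Section integrals_of_functions_of_Y.
Context d (Omega : measurableType d) (R : realType) (P : probability Omega R).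

Lemma measurable_preimage_itv (Y : Omega -> R) (i : interval R) :
  measurable_fun setT Y -> measurable (Y @^-1` [set` i]).
Proof. by move=> mY; rewrite -[_ @^-1` _]setTI; exact: mY. Qed.

Lemma fine_measure_le (A B : set Omega) :
  measurable A -> measurable B -> A `<=` B -> fine (P A) <= fine (P B).
Proof.
move=> mA mB AB.
by rewrite fine_le ?fin_num_measure // le_measure ?inE.
Qed.

Lemma measure_lt1 (A : set Omega) :
  measurable A -> (0 < P (~` A))%E -> fine (P A) < 1.
Proof.
move=> mA; rewrite probability_setC // -[P A]fineK ?fin_num_measure //.
by rewrite -EFinB lte_fin subr_gt0.
Qed.

Lemma integral_cst_on (f : Omega -> R) (E : set Omega) (k : R) :
  measurable E -> (forall w, E w -> f w = k) ->
  (\int[P]_(w in E) (f w)%:E = (k * fine (P E))%:E)%E.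
Proof.
move=> mE fE; rewrite (@eq_integral _ _ _ P E (cst k%:E)); last first.
  by move=> w /[!inE] /fE ->.
by rewrite integral_cst // EFinM fineK ?fin_num_measure.
Qed.

Lemma integral_unsplit (f : Omega -> R) (G D : set Omega) (k : R) :
  measurable_fun setT f -> (forall w, 0 <= f w) ->
  measurable G -> measurable D ->
  (forall w, ~ G w -> f w = k) ->
  (\int[P]_(w in G) (f w)%:E = (k * fine (P G))%:E)%E ->
  G `<=` D \/ D `&` G = set0 ->
  (\int[P]_(w in D) (f w)%:E = (k * fine (P D))%:E)%E.
Proof.
move=> mf f0 mG mD fout fG DG.
have mDG : measurable (D `&` G) by exact: measurableI.
have mDnG : measurable (D `\` G) by exact: measurableD.
have -> : D = (D `\` G) `|` (D `&` G) by rewrite setUC setUIDK.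
rewrite ge0_integral_setU //; first last.
- by apply/eqP; rewrite setDE setIACA setICl setI0.
- by move=> w _; rewrite lee_fin.
- by apply/measurable_EFinP; exact: measurable_funTS.
rewrite (integral_cst_on (k := k) mDnG) => [|w [_]]; last exact: fout.
have [GD|->] := DG.
  rewrite setIidr // fG -EFinD measureU ?fineD ?fin_num_measure //.
    by rewrite mulrDr.
  by rewrite setDE -setIA setICl setI0.
by rewrite integral_set0 setU0 adde0.
Qed.

Lemma integral_one_sub (f : Omega -> R) (D : set Omega) (k : R) :
  measurable_fun setT f -> (forall w, 0 <= f w <= 1) -> measurable D ->
  (\int[P]_(w in D) (f w)%:E = (k * fine (P D))%:E)%E ->
  (\int[P]_(w in D) (1 - f w)%:E = ((1 - k) * fine (P D))%:E)%E.
Proof.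
move=> mf f01 mD fD.
have mf1 : measurable_fun setT (fun w => 1 - f w).
  by apply: measurable_funB => //; exact: measurable_cst.
have sum_1 : (\int[P]_(w in D) (1 - f w)%:E + (k * fine (P D))%:E = (fine (P D))%:E)%E.
  rewrite -fD -ge0_integralD //; first last.
  - by apply/measurable_EFinP; exact: measurable_funTS.
  - by move=> w _; rewrite lee_fin; case/andP: (f01 w).
  - by apply/measurable_EFinP; exact: measurable_funTS.
  - by move=> w _; rewrite lee_fin subr_ge0; case/andP: (f01 w).
  under eq_integral do rewrite -EFinD subrK.
  by rewrite (integral_cst_on (k := 1)) // mul1r.
by rewrite -[LHS](@addeK _ (k * fine (P D))%:E) // sum_1 -EFinB mulrBl mul1r.
Qed.

End integrals_of_functions_of_Y.

Section latent_cdf.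
Context d (Omega : measurableType d) (R : realType) (P : probability Omega R).
Variables (Y : Omega -> R) (p : R -> R).
Hypotheses (mY : measurable_fun setT Y) (mp : measurable_fun setT p)
  (p01 : forall y, 0 <= p y <= 1).

Lemma measurable_preimage_le (t : R) : measurable [set w | Y w <= t].
Proof. exact: (measurable_preimage_itv `]-oo, t] mY). Qed.

Lemma latent_cond_cdf_balanced (pi t : R) : 0 < pi < 1 ->
  (\int[P]_w (p (Y w))%:E = pi%:E)%E ->
  (\int[P]_(w in [set w | (Y w <= t)%R]) (p (Y w))%:E
     = (pi * fine (P [set w | Y w <= t]))%:E)%E ->
  forall x', latent_cond_cdf P Y p x' t = fine (P [set w | Y w <= t]).
Proof.
move=> /andP[pi0 pi1] pT pt x'.
have mpY : measurable_fun setT (p \o Y) by exact: measurableT_comp.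
have pY01 w : 0 <= (p \o Y) w <= 1 by exact: p01.
have pT_setT : (\int[P]_w (p (Y w))%:E = (pi * fine (P setT))%:E)%E.
  by rewrite probability_setT mulr1.
rewrite /latent_cond_cdf (integral_one_sub mpY pY01 measurableT pT_setT).
rewrite (integral_one_sub mpY pY01 (measurable_preimage_le t) pt) pT pt.
rewrite probability_setT /= mulr1.
by case: ifP => _; rewrite mulrAC divff ?mul1r // gt_eqF // subr_gt0.
Qed.

End latent_cdf.

Definition gap_propensity (R : realType) (a h c b pi q : R) (y : R) : R :=
  if y \in `]a, b[ then
    if y \in `]a, h] then 1 else if y \in `]h, c] then 0 else q
  else pi.

Section gap_propensity_values.
Variables (R : realType) (a h c b pi q : R).
Hypotheses (ah : a < h) (hc : h < c) (cb : c < b).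
Local Notation p := (gap_propensity a h c b pi q).

Lemma gap_propensity_out y : y \notin `]a, b[ -> p y = pi.
Proof. by move=> /negbTE yab; rewrite /gap_propensity yab. Qed.

Lemma gap_propensity_left y : y \in `]a, h] -> p y = 1.
Proof.
rewrite /gap_propensity !in_itv /= => /andP[ay yh].
by rewrite ay yh (lt_le_trans (le_lt_trans yh (lt_trans hc cb))).
Qed.

Lemma gap_propensity_middle y : y \in `]h, c] -> p y = 0.
Proof.
rewrite /gap_propensity !in_itv /= => /andP[hy yc].
by rewrite (lt_trans ah hy) (le_lt_trans yc cb) (lt_geF hy) hy yc.
Qed.

Lemma gap_propensity_right y : y \in `]c, b[ -> p y = q.
Proof.
rewrite /gap_propensity !in_itv /= => /andP[cy yb].
by rewrite (lt_trans (lt_trans ah hc) cy) yb !lt_geF // (lt_trans hc cy).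
Qed.

Lemma gap_propensity_ge0_le1 y : 0 <= pi <= 1 -> 0 <= q <= 1 -> 0 <= p y <= 1.
Proof. by move=> pi01 q01; rewrite /gap_propensity; repeat case: ifP; rewrite ?lexx ?ler01. Qed.

Lemma measurable_gap_propensity : measurable_fun setT p.
Proof.
have mem_itv (i : interval R) : measurable_fun setT (fun y : R => y \in i).
  by apply: (measurable_fun_bool true); rewrite setTI; exact: measurable_itv.
by repeat apply: measurable_fun_ifT => //; exact: measurable_cst.
Qed.

End gap_propensity_values.

Lemma balancing_weight (R : realFieldType) (pi mi mj mk : R) : 0 <= mk ->
  mi <= pi * (mi + mj + mk) -> mj <= (1 - pi) * (mi + mj + mk) ->
  exists2 q, 0 <= q <= 1 & mi + q * mk = pi * (mi + mj + mk).
Proof.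
move=> mk0 mi_le mj_le; have [mk_eq0|mk_neq0] := eqVneq mk 0.
  by exists 0; rewrite ?lexx ?ler01 // mul0r addr0; move: mi_le mj_le; rewrite mk_eq0; lra.
have mk_gt0 : 0 < mk by rewrite lt_def mk_neq0.
exists ((pi * (mi + mj + mk) - mi) / mk); last by field.
by rewrite divr_ge0 ?ler_pdivrMr ?subr_ge0 //=; lra.
Qed.

Section gap_masses.
Context d (Omega : measurableType d) (R : realType) (P : probability Omega R).
Variable Y : Omega -> R.
Hypothesis mY : measurable_fun setT Y.
Local Notation mass i := (fine (P (Y @^-1` [set` i]))).

Lemma preimage_itv_oc_cvg0 (a : R) :
  P (Y @^-1` `]a, a + n.+1%:R^-1]) @[n --> \oo] --> 0%E.
Proof.
pose F n := Y @^-1` `]a, a + n.+1%:R^-1].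
have mF n : measurable (F n) by exact: measurable_preimage_itv.
have F0 : \bigcap_n F n = set0.
  apply/seteqP; split => // w Fw.
  have := Fw 0%N I; rewrite /F /= in_itv /= => /andP[aY _].
  have [k kY] := ltr_add_invr aY.
  by have := Fw k I; rewrite /F /= in_itv /= leNgt kY andbF.
rewrite -(measure0 P) -F0; apply: nonincreasing_cvg_mu => //.
- by rewrite ltey_eq fin_num_measure //; exact: (mF 0%N).
- exact: bigcapT_measurable.
- move=> n m nm; apply/subsetPset => w; rewrite /F /= !in_itv /= => /andP[-> /le_trans]; apply.
  by rewrite lerD2l lef_pV2 ?posrE // ler_nat ltnS.
Qed.

Lemma exists_preimage_itv_oc_small (a b eps : R) : a < b -> 0 < eps ->
  exists2 c, a < c < b & mass `]a, c] <= eps * mass `]a, b[.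
Proof.
move=> ab eps0; set m := mass `]a, b[.
have mass_le c : c < b -> mass `]a, c] <= m.
  move=> cb; apply: fine_measure_le; try exact: measurable_preimage_itv.
  by apply: preimage_subset => y /=; rewrite !in_itv /= => /andP[-> /le_lt_trans]; apply.
have [m0|] := ltP 0 m; last first.
  move=> m_le0; have m0 : m = 0 by apply/eqP; rewrite eq_le m_le0 fine_ge0.
  exists ((a + b) / 2); first by apply/andP; split; lra.
  by rewrite m0 mulr0 -m0 mass_le //; lra.
have /fine_cvgP[_ small] := preimage_itv_oc_cvg0 a.
have [N _ HN] := cvgr_lt 0 small (eps * m) (mulr_gt0 eps0 m0).
have [k akb] := ltr_add_invr ab.
have k_le : (maxn N k).+1%:R^-1 <= k.+1%:R^-1 :> R.
  by rewrite lef_pV2 ?posrE // ler_nat ltnS leq_maxr.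
exists (a + (maxn N k).+1%:R^-1).
  by apply/andP; split; [rewrite ltrDl invr_gt0|apply: le_lt_trans akb; rewrite lerD2l].
exact/ltW/HN/leq_maxl.
Qed.

Section split.
Variables (a h c b : R).
Hypotheses (ah : a < h) (hc : h < c) (cb : c < b).

Lemma preimage_gap_setU : Y @^-1` `]a, b[ =
  Y @^-1` `]a, h] `|` (Y @^-1` `]h, c] `|` Y @^-1` `]c, b[).
Proof.
by rewrite -!preimage_setU -!itv_bndbnd_setU // bnd_simp ?ltW // (lt_trans hc cb).
Qed.

Let mI : measurable (Y @^-1` `]a, h]). Proof. exact: measurable_preimage_itv. Qed.
Let mJ : measurable (Y @^-1` `]h, c]). Proof. exact: measurable_preimage_itv. Qed.
Let mK : measurable (Y @^-1` `]c, b[). Proof. exact: measurable_preimage_itv. Qed.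
Let mJK : measurable (Y @^-1` `]h, c] `|` Y @^-1` `]c, b[). Proof. exact: measurableU. Qed.

Let disjI : Y @^-1` `]a, h] `&` (Y @^-1` `]h, c] `|` Y @^-1` `]c, b[) = set0.
Proof.
apply/seteqP; split=> // w; rewrite /= !in_itv /=.
move=> [/andP[_ yh]] [] /andP[hy _]; first lra.
by rewrite ltNge (le_trans yh (ltW hc)) in hy.
Qed.

Let disjJ : Y @^-1` `]h, c] `&` Y @^-1` `]c, b[ = set0.
Proof.
apply/seteqP; split=> // w; rewrite /= !in_itv /=.
by move=> [/andP[_ yc]] /andP[cy _]; lra.
Qed.

Lemma mass_gap_split :
  fine (P (Y @^-1` `]a, b[)) = mass `]a, h] + mass `]h, c] + mass `]c, b[.
Proof.
by rewrite preimage_gap_setU !measureU // !fineD ?fin_numD ?fin_num_measure // addrA.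
Qed.

Lemma integral_gap_propensity (pi q : R) (D : set Omega) :
  0 <= pi <= 1 -> 0 <= q <= 1 ->
  mass `]a, h] + q * mass `]c, b[ = pi * (mass `]a, h] + mass `]h, c] + mass `]c, b[) ->
  measurable D -> Y @^-1` `]a, b[ `<=` D \/ D `&` Y @^-1` `]a, b[ = set0 ->
  (\int[P]_(w in D) (gap_propensity a h c b pi q (Y w))%:E
     = (pi * fine (P D))%:E)%E.
Proof.
pose p := gap_propensity a h c b pi q.
move=> pi01 q01 balance mD split_free.
have pY01 w : 0 <= p (Y w) <= 1 by exact: gap_propensity_ge0_le1.
have mpY : measurable_fun setT (p \o Y).
  exact: measurableT_comp (measurable_gap_propensity _ _ _ _ _ _) mY.
apply: integral_unsplit split_free => //.
- by move=> w; case/andP: (pY01 w).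
- exact: measurable_preimage_itv.
- by move=> w /negP; exact: gap_propensity_out.
have mpYE (E : set Omega) : measurable_fun E (EFin \o (p \o Y)).
  by apply/measurable_EFinP; exact: measurable_funTS.
rewrite mass_gap_split -balance preimage_gap_setU !ge0_integral_setU //;
  try by [apply/eqP | exact: mpYE | move=> w _; rewrite lee_fin; case/andP: (pY01 w)].
rewrite (integral_cst_on P (k := 1)) //; last by move=> w; exact: gap_propensity_left.
rewrite (integral_cst_on P (k := 0)) //; last by move=> w; exact: gap_propensity_middle.
rewrite (integral_cst_on P (k := q)) //; last by move=> w; exact: gap_propensity_right.
by rewrite -!EFinD mul0r add0r mul1r.
Qed.

End split.

Lemma exists_balanced_gap_split (pi a b : R) : 0 < pi < 1 -> a < b ->
  exists h c q, [/\ a < h, h < c, c < b, 0 <= q <= 1 &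
    mass `]a, h] + q * mass `]c, b[ = pi * (mass `]a, h] + mass `]h, c] + mass `]c, b[)].
Proof.
move=> /andP[pi0 pi1] ab; have pi1' : 0 < 1 - pi by rewrite subr_gt0.
have [c /andP[ac cb] small] := exists_preimage_itv_oc_small ab (mulr_gt0 pi0 pi1').
pose h := (a + c) / 2; have ah : a < h by rewrite /h; lra.
have hc : h < c by rewrite /h; lra.
have mass_le_ac (u v : R) : a <= u -> v <= c -> mass `]u, v] <= mass `]a, c].
  move=> au vc; apply: fine_measure_le; try exact: measurable_preimage_itv.
  apply: preimage_subset => y /=; rewrite !in_itv /= => /andP[uy yv].
  by rewrite (le_lt_trans au uy) (le_trans yv vc).
have [q q01 balance] : exists2 q, 0 <= q <= 1 &
    mass `]a, h] + q * mass `]c, b[ = pi * (mass `]a, h] + mass `]h, c] + mass `]c, b[).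
  have m0 : 0 <= mass `]a, b[ by rewrite fine_ge0.
  have le_pi : pi * (1 - pi) * mass `]a, b[ <= pi * mass `]a, b[.
    by rewrite ler_wpM2r // ler_piMr ?ltW //; lra.
  have le_1pi : pi * (1 - pi) * mass `]a, b[ <= (1 - pi) * mass `]a, b[.
    by rewrite ler_wpM2r // ler_piMl ?ltW.
  have := mass_le_ac a h (lexx a) (ltW hc); have := mass_le_ac h c (ltW ah) (lexx c).
  move=> *; apply: balancing_weight; rewrite ?fine_ge0 // -mass_gap_split //; lra.
by exists h, c, q.
Qed.

End gap_masses.

Lemma lebesgue_measure_gt0 (R : realType) (a b : R) (A : set R) :
  a < b -> `]a, b] `<=` A -> (0 < lebesgue_measure A)%E.
Proof.
move=> ab abA.
have ab_gt0 : (0 < lebesgue_measure `]a, b])%E.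
  by rewrite lebesgue_measure_itv /= lte_fin ab -EFinB lte_fin subr_gt0.
exact: lt_le_trans ab_gt0 (@le_outer_measure _ _ lebesgue_measure _ _ abA).
Qed.

Lemma preimage_le_split_free (Omega : Type) (R : realType) (Y : Omega -> R) (a b t : R) :
  t \notin `]a, b[ ->
  Y @^-1` `]a, b[ `<=` [set w | Y w <= t] \/ [set w | Y w <= t] `&` Y @^-1` `]a, b[ = set0.
Proof.
rewrite in_itv /= negb_and -!leNgt => /orP[ta|bt].
  right; apply/seteqP; split=> // w [/= Yt]; rewrite in_itv /= => /andP[aY _].
  by move: (le_lt_trans (le_trans Yt ta) aY); rewrite ltxx.
by left=> w /=; rewrite in_itv /= => /andP[_ /ltW/le_trans]; apply.
Qed.

Theorem corollary3 (d : measure_display) (Omega : measurableType d)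
  (R : realType) (P : probability Omega R)
  (Y X : Omega -> R) (T : set R)
  (mY : measurable_fun setT Y) (mX : measurable_fun setT X)
  (Xbin : forall w, X w = 0 \/ X w = 1)
  (PX0 : (0 < P [set w | X w = 0%R])%E) (PX1 : (0 < P [set w | X w = 1%R])%E)
  (Fincr : forall x', x' = 0 \/ x' = 1 ->
     forall y y', cond_supp P Y X x' y -> cond_supp P Y X x' y' -> y < y' ->
       cond_cdf P Y X x' y < cond_cdf P Y X x' y')
  (Fcont : forall x', x' = 0 \/ x' = 1 ->
     forall y, cond_supp P Y X x' y ->
       cond_cdf P Y X x' z @[z --> y] --> cond_cdf P Y X x' y)
  (lohi : (supp_lo P Y < supp_hi P Y)%E)
  (gapT : exists a b : R, a < b /\
     forall y, a < y < b ->
       (supp_lo P Y <= y%:E <= supp_hi P Y)%E /\ ~ T y) :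
  exists p : R -> R,
    [/\ measurable_fun setT p,
        (forall y, 0 <= p y <= 1),
        (\int[P]_w (p (Y w))%:E = P [set w | X w = 1%R])%E,
        T_independent (latent_cond_cdf P Y p) T
      & (0 < lebesgue_measure
               [set y : R | (supp_lo P Y <= y%:E <= supp_hi P Y)%E /\ p y = 0%R])%E
        /\ (0 < lebesgue_measure
               [set y : R | (supp_lo P Y <= y%:E <= supp_hi P Y)%E /\ p y = 1%R])%E].
Proof.
have [a [b [ab gap]]] := gapT.
have mX1 : measurable [set w | X w = 1%R].
  by rewrite -[X in measurable X]setTI; exact: mX measurableT _ (measurable_set1 _).
have X0E : [set w | X w = 0%R] = ~` [set w | X w = 1%R].
  apply/seteqP; split=> w /=; first by move=> ->; apply/eqP; rewrite eq_sym oner_neq0.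
  by case: (Xbin w).
set pi := fine (P [set w | X w = 1%R]).
have pi01 : 0 < pi < 1.
  by rewrite fine_gt0 ?measure_lt1 -?X0E // PX1 ltey_eq fin_num_measure.
have [h [c [q [ah hc cb q01 balance]]]] := exists_balanced_gap_split P mY pi01 ab.
pose p := gap_propensity a h c b pi q.
have pi_ge0_le1 : 0 <= pi <= 1 by case/andP: pi01 => *; rewrite !ltW.
have p01 y : 0 <= p y <= 1 by exact: gap_propensity_ge0_le1.
have mp : measurable_fun setT p by exact: measurable_gap_propensity.
have intp D := integral_gap_propensity (D := D) mY ah hc cb pi_ge0_le1 q01 balance.
have pT : (\int[P]_w (p (Y w))%:E = pi%:E)%E.
  by rewrite intp ?probability_setT ?mulr1 //; left.
have hull y : y \in `]a, b[ -> (supp_lo P Y <= y%:E <= supp_hi P Y)%E by move=> /gap[].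
exists p; split=> //.
- by rewrite pT /pi fineK ?fin_num_measure.
- move=> t Tt; have tab : t \notin `]a, b[ by apply/negP => /gap[].
  have pt := intp _ (measurable_preimage_le mY t) (preimage_le_split_free Y tab).
  by rewrite /T_independent !(latent_cond_cdf_balanced mY mp p01 pi01 pT pt).
split.
- apply: (lebesgue_measure_gt0 hc) => y yhc; split; last exact: gap_propensity_middle.
  by apply/hull/(subitvP _ yhc); rewrite subitvE !bnd_simp (ltW ah) cb.
- apply: (lebesgue_measure_gt0 ah) => y yah; split; last exact: gap_propensity_left.
  by apply/hull/(subitvP _ yah); rewrite subitvE !bnd_simp (lt_trans hc cb).
Qed.
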